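(* Let $G$ be a monomer graph, $G^p$ its polymer graph and $G^{*}$ its induced star-linking graph, all with the same initial node features (node $v^p_i$ of $G^p$ having the feature of $v_{i\bmod n}$). Consider a network composed of message passing layers and nodewise transformations, ending with a mean pooling. Then the output of the network on $G^p$ equals its output on $G^{*}$.
   Context: A monomer graph is $G=(V,E,\mathbf{X})$ with atoms $V=\{v_0,\dots,v_{n-1}\}$, bonds $E$, features $\mathbf{x}_i$ of $v_i$, and boundary atoms $v_0,v_{n-1}$. The polymer graph $G^p$ has nodes $v^p_i$, $i\in\mathbb{Z}$, with $v^p_i$ carrying the features of $v_{i\bmod n}$; its edges are $(v^p_{kn+a},v^p_{kn+b})$ for every $k\in\mathbb{Z}$ and every bond $(v_a,v_b)\in E$, plus $(v^p_{kn-1},v^p_{kn})$ for every $k\in\mathbb{Z}$. The induced star-linking graph $G^*$ has node set $V$, edge set $E\cup\{(v_0,v_{n-1})\}$ and the same features. A message passing layer updates all node features simultaneously by $\mathbf{x}_v\gets\mathrm{UPDATE}(\mathbf{x}_v,\mathrm{AGG}(\{\mathbf{x}_u\}_{u\in\mathcal{N}(v)}))$ with fixed functions UPDATE, AGG ($\mathcal{N}(v)$ the neighbors of $v$). A nodewise transformation applies a fixed function to each node feature independently. The layers are applied identically on both graphs. Node features on $G^p$ remain $n$-periodic in the index, and mean pooling on $G^p$ means the average of the node features over one period $v^p_0,\dots,v^p_{n-1}$; on $G^*$ it is the average over all $n$ nodes. *)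

From HB Require Import structures.
From mathcomp Require Import all_boot all_order all_algebra.
From mathcomp Require Import boolp.
Set Implicit Arguments. Unset Strict Implicit. Unset Printing Implicit Defensive.
Import Order.TTheory GRing.Theory Num.Theory.
Local Open Scope ring_scope.

(* An aggregation function: a function of the MULTISET of neighbour features,
   i.e. a function on lists that is invariant under permutation. *)
Record agg_fun (T : eqType) := AggFun {
  agg_app :> seq T -> T;
  agg_perm : forall s t : seq T, perm_eq s t -> agg_app s = agg_app t }.

Inductive layer (T : eqType) :=
  | MPLayer of (T -> T -> T) & agg_fun T
  | NodeLayer of (T -> T).

(* A graph on node type V is given by its neighbour lists (each neighbour listed
   once); all nodes are updated simultaneously. *)
Definition apply_layer (V : Type) (T : eqType) (nbrs : V -> seq V)
    (l : layer T) (h : V -> T) : V -> T :=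
  match l with
  | MPLayer upd agg => fun v => upd (h v) (agg (map h (nbrs v)))
  | NodeLayer f => fun v => f (h v)
  end.

Definition run_net (V : Type) (T : eqType) (nbrs : V -> seq V)
    (net : seq (layer T)) (h : V -> T) : V -> T :=
  foldl (fun h' l => apply_layer nbrs l h') h net.

(* Monomer: atoms 'I_n, bonds E (undirected: (a,b) in E is the bond {v_a,v_b}). *)
Definition polymer_edge (n : nat) (E : rel 'I_n) (i j : int) : Prop :=
  (exists (k : int) (a b : 'I_n), E a b /\
       i = k * n%:Z + (a : nat)%:Z /\ j = k * n%:Z + (b : nat)%:Z)
  \/ (exists k : int, i = k * n%:Z - 1 /\ j = k * n%:Z).

Definition polymer_adj (n : nat) (E : rel 'I_n) (i j : int) : Prop :=
  polymer_edge E i j \/ polymer_edge E j i.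

(* Neighbours of v^p_i: every neighbour lies within distance n of i, so we list
   the adjacent nodes among i-2n, ..., i+2n (each once). *)
Definition polymer_nbrs (n : nat) (E : rel 'I_n) (i : int) : seq int :=
  [seq j <- [seq i + (t : nat)%:Z - (2 * n)%:Z | t <- iota 0 (4 * n).+1]
     | `[< polymer_adj E i j >]].

Definition star_edge (n : nat) (E : rel 'I_n) (a b : 'I_n) : bool :=
  E a b || (((a : nat) == 0%N) && ((b : nat) == n.-1)).

Definition star_adj (n : nat) (E : rel 'I_n) (a b : 'I_n) : bool :=
  star_edge E a b || star_edge E b a.

Definition star_nbrs (n : nat) (E : rel 'I_n) (a : 'I_n) : seq 'I_n :=
  [seq b <- enum 'I_n | star_adj E a b].

Definition mean_pool_polymer (R : numFieldType) (T : lmodType R) (n : nat)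
    (h : int -> T) : T :=
  (n%:R)^-1 *: \sum_(a < n) h (a : nat)%:Z.

Definition mean_pool_star (R : numFieldType) (T : lmodType R) (n : nat)
    (h : 'I_n -> T) : T :=
  (n%:R)^-1 *: \sum_(a < n) h a.

(* Reduction modulo n, i |-> i mod n, is a covering map from G^p onto G^*: it
   sends the neighbours of each polymer node bijectively onto the neighbours of
   its image, the bond (v^p_{kn-1}, v^p_{kn}) between monomers going to the star
   link (v_{n-1}, v_0). Since aggregation only sees the multiset of neighbour
   features, every layer preserves the property that the features on G^p are
   pulled back from those on G^*; mean pooling over one period of G^p then
   averages exactly the features of G^*. *)

From HB Require Import structures.
From mathcomp Require Import all_boot all_order all_algebra.
From mathcomp Require Import boolp zify.
Import Order.TTheory GRing.Theory Num.Theory.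
Local Open Scope ring_scope.

Section Covering.
Context {V : Type} {W T : eqType}.
Context {nbrsV : V -> seq V} {nbrsW : W -> seq W} {p : V -> W}.
Hypothesis nbrs_cover : forall v, perm_eq (map p (nbrsV v)) (nbrsW (p v)).

Lemma apply_layer_cover (l : layer T) {hV : V -> T} {hW : W -> T} :
  hV =1 hW \o p -> apply_layer nbrsV l hV =1 apply_layer nbrsW l hW \o p.
Proof.
move=> hVW v; case: l => [upd agg|f] /=; rewrite hVW //.
by rewrite (eq_map hVW) map_comp (agg_perm agg (perm_map hW (nbrs_cover v))).
Qed.

Lemma run_net_cover (net : seq (layer T)) {hV : V -> T} {hW : W -> T} :
  hV =1 hW \o p -> run_net nbrsV net hV =1 run_net nbrsW net hW \o p.
Proof.
elim: net hV hW => [|l net IHnet] hV hW hVW //=.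
exact/IHnet/apply_layer_cover.
Qed.

End Covering.

Definition polymer_node {n : nat} (k : int) (a : 'I_n) : int := k * n%:Z + a%:Z.

Lemma mem_polymer_window (n : nat) (i j : int) : `|j - i| <= (2 * n)%:Z ->
  j \in [seq i + t%:Z - (2 * n)%:Z | t <- iota 0 (4 * n).+1].
Proof.
by move=> near; apply/mapP; exists (absz (j - i + (2 * n)%:Z)); rewrite ?mem_iota; lia.
Qed.

Lemma polymer_nbrs_uniq (n : nat) (E : rel 'I_n) (i : int) : uniq (polymer_nbrs E i).
Proof.
apply/filter_uniq; rewrite map_inj_uniq ?iota_uniq // => t u.
by move/eqP; rewrite -subr_eq0 => /eqP; lia.
Qed.

Section Polymer.
Variable n : nat.

Definition polymer_atom (i : int) : 'I_n.+1 := inord `|(i %% n.+1)%Z|.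

Lemma polymer_atom_node (k : int) (a : 'I_n.+1) : polymer_atom (polymer_node k a) = a.
Proof.
rewrite /polymer_atom /polymer_node modzMDl modz_small ?absz_nat ?inord_val //.
by have := ltn_ord a; lia.
Qed.

Lemma polymer_atom_nat (a : 'I_n.+1) : polymer_atom a%:Z = a.
Proof. by have := polymer_atom_node 0 a; rewrite /polymer_node mul0r add0r. Qed.

Lemma polymer_nodeE (i : int) : polymer_node (i %/ n.+1)%Z (polymer_atom i) = i.
Proof.
have mod_ge0 : 0 <= (i %% n.+1)%Z by exact: modz_ge0.
have mod_lt : (i %% n.+1)%Z < n.+1%:Z by exact: ltz_pmod.
rewrite /polymer_node /polymer_atom inordK; last by lia.
by rewrite gez0_abs // -divz_eq.
Qed.

Lemma polymer_node_inj {k k' : int} {a a' : 'I_n.+1} :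
  polymer_node k a = polymer_node k' a' -> k = k' /\ a = a'.
Proof.
move=> eq_node; have eq_atom : a = a'.
  by rewrite -(polymer_atom_node k a) -(polymer_atom_node k' a') eq_node.
by move: eq_node; rewrite /polymer_node eq_atom => /addIr/(mulIf _) -> //.
Qed.

(* The star link (v_0, v_{n-1}) of G^* lifts to the bond joining consecutive
   monomers of G^p, so its lift changes the monomer index k by one. *)
Definition link_shift (a b : 'I_n.+1) : int :=
  if ((a : nat) == 0%N) && ((b : nat) == n) then -1
  else if ((a : nat) == n) && ((b : nat) == 0%N) then 1 else 0.

Definition polymer_lift (k : int) (a b : 'I_n.+1) : int :=
  polymer_node (k + link_shift a b) b.

Lemma polymer_atom_lift (k : int) (a : 'I_n.+1) : cancel (polymer_lift k a) polymer_atom.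
Proof. by move=> b; rewrite polymer_atom_node. Qed.

Lemma polymer_lift_near (k : int) (a b : 'I_n.+1) :
  `|polymer_lift k a b - polymer_node k a| <= (2 * n.+1)%:Z.
Proof.
have := ltn_ord a; have := ltn_ord b.
by rewrite /polymer_lift /polymer_node /link_shift; repeat case: ifP => _; lia.
Qed.

Variable E : rel 'I_n.+1.
Hypothesis n_gt0 : (0 < n)%N.
Hypothesis boundary_unbonded :
  forall a b : 'I_n.+1, (a : nat) = 0%N -> (b : nat) = n -> ~~ E a b /\ ~~ E b a.

Lemma link_shift_bond (a b : 'I_n.+1) : E a b || E b a -> link_shift a b = 0.
Proof.
rewrite /link_shift; case: ifP => [/andP[/eqP a0 /eqP bn] | _].
  by have [/negbTE-> /negbTE->] := boundary_unbonded _ _ a0 bn.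
case: ifP => [/andP[/eqP an /eqP b0] | _] //.
by have [/negbTE-> /negbTE->] := boundary_unbonded _ _ b0 an.
Qed.

Lemma polymer_lift_adj (k : int) (a b : 'I_n.+1) :
  star_adj E a b -> polymer_adj E (polymer_node k a) (polymer_lift k a b).
Proof.
rewrite /polymer_lift /link_shift /polymer_node.
case: ifP => [/andP[/eqP a0 /eqP bn] _ | not_fwd].
  by right; right; exists k; rewrite a0 bn; split; lia.
case: ifP => [/andP[/eqP an /eqP b0] _ | not_bwd].
  by left; right; exists (k + 1); rewrite an b0; split; lia.
rewrite /star_adj /star_edge /= not_fwd [(_ == 0%N) && (_ == n)]andbC not_bwd !orbF addr0.
by case/orP => bond; [left; left; exists k, a, b | right; left; exists k, b, a].
Qed.

Lemma polymer_adj_lift (k : int) (a : 'I_n.+1) (j : int) :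
  polymer_adj E (polymer_node k a) j -> exists2 b, star_adj E a b & j = polymer_lift k a b.
Proof.
have shift_link : link_shift ord_max ord0 = 1 by rewrite /link_shift /= eqn0Ngt n_gt0 eqxx.
have shift_link_rev : link_shift ord0 ord_max = -1 by rewrite /link_shift /= eqxx.
case=> [[[k' [a' [b' [bond [ei ->]]]]] | [k' [ei ->]]]
      | [[k' [a' [b' [bond [-> ei]]]]] | [k' [-> ei]]]].
- have [-> ->] := polymer_node_inj ei.
  exists b'; first by rewrite /star_adj /star_edge bond.
  by rewrite /polymer_lift link_shift_bond ?bond // addr0.
- have {}ei : polymer_node k a = polymer_node (k' - 1) (@ord_max n).
    by rewrite ei /polymer_node /=; lia.
  have [-> ->] := polymer_node_inj ei.
  exists ord0; first by rewrite /star_adj /star_edge /= !eqxx !orbT.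
  by rewrite /polymer_lift shift_link /polymer_node /=; lia.
- have [-> ->] := polymer_node_inj ei.
  exists a'; first by rewrite /star_adj /star_edge bond orbT.
  by rewrite /polymer_lift link_shift_bond ?bond ?orbT // addr0.
- have {}ei : polymer_node k a = polymer_node k' (@ord0 n) by rewrite ei /polymer_node /= addr0.
  have [-> ->] := polymer_node_inj ei.
  exists ord_max; first by rewrite /star_adj /star_edge /= !eqxx /= orbT.
  by rewrite /polymer_lift shift_link_rev /polymer_node /=; lia.
Qed.

Lemma perm_polymer_nbrs (k : int) (a : 'I_n.+1) :
  perm_eq (polymer_nbrs E (polymer_node k a)) (map (polymer_lift k a) (star_nbrs E a)).
Proof.
apply: uniq_perm; first exact: polymer_nbrs_uniq.
  by rewrite (map_inj_uniq (can_inj (polymer_atom_lift k a))) filter_uniq ?enum_uniq.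
move=> j; apply/idP/idP.
  rewrite mem_filter => /andP[/asboolP/polymer_adj_lift[b adj ->] _].
  by apply: map_f; rewrite mem_filter mem_enum adj.
case/mapP => b; rewrite mem_filter mem_enum andbT => adj ->.
rewrite mem_filter mem_polymer_window ?polymer_lift_near // andbT.
exact/asboolP/polymer_lift_adj.
Qed.

Lemma polymer_atom_cover (i : int) :
  perm_eq (map polymer_atom (polymer_nbrs E i)) (star_nbrs E (polymer_atom i)).
Proof.
rewrite -{1}(polymer_nodeE i).
have := perm_map polymer_atom (perm_polymer_nbrs (i %/ n.+1)%Z (polymer_atom i)).
by rewrite -map_comp (eq_map (polymer_atom_lift _ _)) map_id.
Qed.

End Polymer.

Theorem theorem1 (R : numFieldType) (T : lmodType R) (n : nat) (E : rel 'I_n)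
    (x : 'I_n -> T) (xp : int -> T) (net : seq (layer T)) :
  (1 < n)%N ->
  (forall a b : 'I_n, (a : nat) = 0%N -> (b : nat) = n.-1 -> ~~ E a b /\ ~~ E b a) ->
  (forall (k : int) (a : 'I_n), xp (k * n%:Z + (a : nat)%:Z) = x a) ->
  mean_pool_polymer n (run_net (polymer_nbrs E) net xp)
  = mean_pool_star (run_net (star_nbrs E) net x).
Proof.
case: n E x => [|n] E x // n_gt0 unbonded periodic.
have xp_cover : xp =1 x \o polymer_atom n.
  by move=> i /=; rewrite -{1}(polymer_nodeE n i); apply: periodic.
have run_cover := run_net_cover (@polymer_atom_cover n E n_gt0 unbonded) net xp_cover.
rewrite /mean_pool_polymer /mean_pool_star; congr (_ *: _).
by apply: eq_bigr => a _; rewrite run_cover /= polymer_atom_nat.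
Qed.
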